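(* For $k\ge2$, let $\mathcal B'$ be the set of $k\times k$ symmetric matrices over $\mathbb F_2$ of rank $k-2$ with every row sum $0$. Then $\#\mathcal B'=2^{\binom{k-1}{2}}\,u_{k-1}\,(2^{k-1}-1)$, where $u_j=\prod_{i=1}^{\lfloor j/2\rfloor}(1-2^{1-2i})$. *)

From HB Require Import structures.
From mathcomp Require Import all_boot all_order all_algebra.
Set Implicit Arguments. Unset Strict Implicit. Unset Printing Implicit Defensive.
Import Order.TTheory GRing.Theory Num.Theory.

Local Open Scope ring_scope.

Definition u_seq (j : nat) : rat :=
  \prod_(1 <= i < (j./2).+1) (1 - (2%:Q ^- (2 * i - 1)%N)).

Definition Bprime (k : nat) : {set 'M['F_2]_k} :=
  [set M : 'M['F_2]_k | [&& M^T == M, \rank M == (k - 2)%N &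
                            [forall i, \sum_(j < k) M i j == 0]]].

From HB Require Import structures.
From mathcomp Require Import all_boot all_order all_algebra ring zify.
Import Order.TTheory GRing.Theory Num.Theory.
Set Implicit Arguments. Unset Strict Implicit. Unset Printing Implicit Defensive.
Local Open Scope ring_scope.

(* Congruence M |-> P M P^T by an invertible P preserves symmetry, rank and invertibility,
   and moves any nonzero row vector to e0 = (1, 0, ..., 0); a symmetric M with e0 M = 0 is
   diag(0, N).  So for v <> 0 the symmetric M of rank r with v M = 0 correspond to the
   symmetric N of rank r and one size less.  Taking for v the all-ones vector, B' matches the
   symmetric (k-1) x (k-1) matrices of corank one.  Over F_q each of these has q - 1 nonzero
   kernel vectors, so double counting gives (q - 1) #B' = (q^(k-1) - 1) s(k-2), where s(n)
   counts the invertible symmetric n x n matrices.  Splitting off the first row and taking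
   Schur complements gives s(n+2) = (q-1) q^(n+1) s(n+1) + (q^(n+1) - 1) q^(n+1) s(n), and
   for q = 2 this recursion with s(0) = s(1) = 1 is solved by 2^C(n+1,2) u_(n+1). *)

Section Congruence.
Variable F : fieldType.

Definition congr_mx n (P M : 'M[F]_n) := P *m M *m P^T.

Lemma mxrank_congr n (P M : 'M[F]_n) : P \in unitmx -> \rank (congr_mx P M) = \rank M.
Proof.
move=> uP; rewrite mxrankMfree ?row_free_unit ?unitmx_tr //.
by rewrite -mxrank_tr trmx_mul mxrankMfree ?row_free_unit ?unitmx_tr // mxrank_tr.
Qed.

Lemma trmx_congr n (P M : 'M[F]_n) : (congr_mx P M)^T = congr_mx P M^T.
Proof. by rewrite !trmx_mul trmxK mulmxA. Qed.

Lemma congr_mx_inj n (P : 'M[F]_n) : P \in unitmx -> injective (congr_mx P).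
Proof.
move=> uP M1 M2 /(congr1 (fun X => invmx P *m X *m invmx P^T)).
have uPT : P^T \in unitmx by rewrite unitmx_tr.
by rewrite /congr_mx -!mulmxA !mulmxV // !mulmx1 !mulmxA !mulVmx // !mul1mx.
Qed.

Lemma congr_mx_sym n (P M : 'M[F]_n) : P \in unitmx ->
  ((congr_mx P M)^T == congr_mx P M) = (M^T == M).
Proof. by move=> uP; rewrite trmx_congr (inj_eq (congr_mx_inj uP)). Qed.

Lemma congr_mx_unit n (P M : 'M[F]_n) : P \in unitmx ->
  (congr_mx P M \in unitmx) = (M \in unitmx).
Proof. by move=> uP; rewrite !unitmx_mul uP unitmx_tr uP andbT. Qed.

Definition e0 n : 'rV[F]_(1 + n) := row_mx 1%:M 0.

Lemma e0_neq0 n : e0 n != 0.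
Proof. by rewrite /e0 row_mx_eq0 negb_and matrix_nonzero1. Qed.

Lemma mul_e0_block n (A : 'M[F]_1) B C (D : 'M_n) : e0 n *m block_mx A B C D = row_mx A B.
Proof. by rewrite /e0 mul_row_block !mul0mx !addr0 !mul1mx. Qed.

(* Gaussian elimination writes v = c *m e0 n *m R with c of size 1x1 and R invertible. *)
Lemma e0_mulmx_onto n (v : 'rV[F]_(1 + n)) : v != 0 -> exists2 P, P \in unitmx & e0 n *m P = v.
Proof.
move=> nz_v; have rk_v : \rank v = 1%N.
  by apply/eqP; rewrite eqn_leq rank_leq_row lt0n mxrank_eq0 nz_v.
have := mulmx_ebase v; rewrite rk_v pid_mx_row.
set c := col_ebase v; set R := row_ebase v => def_v.
have uc : c 0 0 \is a GRing.unit.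
  by have := col_ebase_unit v; rewrite unitmxE det_mx11.
exists (c 0 0 *: R); first by rewrite unitmxZ ?row_ebase_unit.
by rewrite -scalemxAr -def_v {2}[c]mx11_scalar mul_scalar_mx scalemxAl.
Qed.

Lemma sym_dlsubmx p q (M : 'M[F]_(p + q)) : M^T = M -> dlsubmx M = (ursubmx M)^T.
Proof. by move=> sM; rewrite trmx_ursub sM. Qed.

Lemma sym_drsubmx p q (M : 'M[F]_(p + q)) : M^T = M -> (drsubmx M)^T = drsubmx M.
Proof. by move=> sM; rewrite trmx_drsub sM. Qed.

Lemma sym_ker_e0 n (M : 'M[F]_(1 + n)) : M^T = M -> e0 n *m M = 0 ->
  M = block_mx 0 0 0 (drsubmx M).
Proof.
move=> sM; rewrite -{1}[M]submxK mul_e0_block => /eqP; rewrite row_mx_eq0.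
by case/andP => /eqP ul0 /eqP ur0; rewrite -{1}[M]submxK (sym_dlsubmx sM) ul0 ur0 trmx0.
Qed.

Lemma schur_det p q (H : 'M[F]_p) (C : 'M_(p, q)) (N : 'M_q) : H \in unitmx ->
  \det (block_mx H C C^T (N + C^T *m invmx H *m C)) = \det H * \det N.
Proof.
move=> uH; have -> : block_mx H C C^T (N + C^T *m invmx H *m C) =
    block_mx 1%:M 0 (C^T *m invmx H) 1%:M *m block_mx H C 0 N.
  rewrite mulmx_block !mul1mx !mul0mx !addr0 -[C^T *m invmx H *m H]mulmxA.
  by rewrite mulVmx // mulmx1 [N + _]addrC.
by rewrite det_mulmx det_lblock det_ublock !det1 !mul1r.
Qed.

Lemma congr_mx_diag1 m n (Q : 'M[F]_n) (M : 'M[F]_(m + n)) :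
  let M' := congr_mx (block_mx 1%:M 0 0 Q) M in
  ulsubmx M' = ulsubmx M /\ ursubmx M' = ursubmx M *m Q^T.
Proof.
rewrite /congr_mx -[M]submxK tr_block_mx !trmx0 trmx1 !mulmx_block.
by rewrite !(mul1mx, mul0mx, mulmx0, mulmx1, addr0, add0r) !block_mxKul !block_mxKur.
Qed.

End Congruence.

Arguments e0 {F} n.

Section Counting.
Variable F : finFieldType.

Lemma card_congr_mx n (P : 'M[F]_n) (A B : pred 'M[F]_n) :
  P \in unitmx -> (forall M, B (congr_mx P M) = A M) ->
  #|[set M | A M]| = #|[set M | B M]|.
Proof.
move=> uP eqAB; rewrite -[RHS](card_preimset _ (congr_mx_inj uP)).
by apply: eq_card => M; rewrite !inE eqAB.
Qed.

Lemma card_sym_ker_rank n (r : nat) (v : 'rV[F]_(1 + n)) : v != 0 ->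
  #|[set M : 'M[F]_(1 + n) | [&& M^T == M, v *m M == 0 & \rank M == r]]| =
  #|[set N : 'M[F]_n | (N^T == N) && (\rank N == r)]|.
Proof.
move=> nz_v; have [P uP def_v] := e0_mulmx_onto nz_v.
rewrite (@card_congr_mx _ P _ (fun M => [&& M^T == M, e0 n *m M == 0 & \rank M == r])) //;
  last first.
  move=> M; rewrite congr_mx_sym // mxrank_congr // /congr_mx !mulmxA def_v.
  by rewrite mulmx_free_eq0 // row_free_unit unitmx_tr.
have block_inj : injective (fun N : 'M[F]_n => block_mx (0 : 'M_1) 0 0 N).
  by move=> N1 N2 /(congr1 drsubmx); rewrite !block_mxKdr.
rewrite -[RHS](card_imset _ block_inj); apply: eq_card => M; rewrite inE.
apply/and3P/imsetP => [[/eqP sM /eqP kerM /eqP rkM] | [N]].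
  have def_M := sym_ker_e0 sM kerM.
  exists (drsubmx M) => //; rewrite inE sym_drsubmx // eqxx -rkM {2}def_M.
  by rewrite rank_diag_block_mx mxrank0 add0n eqxx.
rewrite inE => /andP[/eqP sN rkN] ->; split.
- by rewrite tr_block_mx !trmx0 sN.
- by rewrite mul_e0_block row_mx_eq0 !eqxx.
- by rewrite rank_diag_block_mx mxrank0.
Qed.

Definition sym_unit_count n := #|[set N : 'M[F]_n | (N^T == N) && (N \in unitmx)]|.

Lemma card_nz_ker_corank1 n (M : 'M[F]_(1 + n)) : \rank M = n ->
  #|[set v : 'rV[F]_(1 + n) | (v != 0) && (v *m M == 0)]| = #|F|.-1.
Proof.
move=> rkM; have rk_ker : \rank (kermx M) = 1%N by rewrite mxrank_ker rkM addnK.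
set v0 := nz_row (kermx M).
have nz_v0 : v0 != 0 by rewrite nz_row_eq0 -mxrank_eq0 rk_ker.
have v0_ker : (v0 <= kermx M)%MS := nz_row_sub (kermx M).
have ker_v0 : (kermx M <= v0)%MS.
  by have := mxrank_leqif_sup v0_ker; rewrite rk_ker rank_rV nz_v0 => /leqif_refl.
have scale_inj : injective (fun c : F => c *: v0).
  move=> c1 c2 /eqP; rewrite -subr_eq0 -scalerBl scaler_eq0 (negbTE nz_v0) orbF.
  by rewrite subr_eq0 => /eqP.
rewrite -(cardC1 (0 : F)) -(card_imset _ scale_inj); apply: eq_card => v; rewrite inE.
apply/andP/imsetP => [[nz_v vM] | [c nz_c ->]].
  have : (v <= v0)%MS by apply: submx_trans ker_v0; rewrite sub_kermx.
  case/submxP => x; rewrite [x]mx11_scalar mul_scalar_mx => def_v.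
  exists (x 0 0) => //; rewrite !inE; apply: contraNneq nz_v => x0.
  by rewrite def_v x0 scale0r.
rewrite inE in nz_c; rewrite scaler_eq0 negb_or nz_c nz_v0 -scalemxAl.
by rewrite (sub_kermxP v0_ker) scaler0 eqxx.
Qed.

Lemma card_sym_corank1 n :
  (#|F|.-1 * #|[set M : 'M[F]_(1 + n) | (M^T == M) && (\rank M == n)]|)%N =
  ((#|F| ^ (1 + n)).-1 * sym_unit_count n)%N.
Proof.
rewrite mulnC -sum_nat_const.
transitivity (\sum_(M : 'M[F]_(1 + n) | (M^T == M) && (\rank M == n))
               \sum_(v : 'rV[F]_(1 + n) | (v != 0%R) && (v *m M == 0%R)) 1)%N.
  apply: eq_big => [M | M]; rewrite inE // => /andP[_ /eqP rkM].
  by rewrite -(card_nz_ker_corank1 rkM) -sum1_card; apply: eq_bigl => v; rewrite inE.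
rewrite (exchange_big_dep (fun v : 'rV[F]_(1 + n) => v != 0)) /=; last by move=> M v _ /andP[].
rewrite -[(1 + n)%N in RHS]mul1n -(card_mx F 1 (1 + n)) -(cardC1 0) -sum_nat_const.
apply: eq_bigr => v nz_v.
transitivity #|[set M : 'M[F]_(1 + n) | [&& M^T == M, v *m M == 0 & \rank M == n]]|.
  rewrite -sum1_card; apply: eq_bigl => M; rewrite inE nz_v /=.
  by case: (M^T == M); rewrite //= andbC.
by rewrite card_sym_ker_rank //; apply: eq_card => N; rewrite !inE -row_free_unit.
Qed.

(* Schur complement: N |-> [[H, C], [C^T, N + C^T H^-1 C]] is a bijection onto the
   symmetric invertible matrices with upper blocks H and C. *)
Lemma card_sym_unit_schur p q (H : 'M[F]_p) (C : 'M_(p, q)) : H^T = H -> H \in unitmx ->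
  #|[set M : 'M[F]_(p + q) | [&& M^T == M, M \in unitmx, ulsubmx M == H & ursubmx M == C]]|
  = sym_unit_count q.
Proof.
move=> sH uH; set D := C^T *m invmx H *m C.
have sD : D^T = D by rewrite /D !trmx_mul trmxK trmx_inv sH mulmxA.
pose f N := block_mx H C C^T (N + D).
have f_inj : injective f by move=> N1 N2 /(congr1 drsubmx); rewrite !block_mxKdr => /addIr.
rewrite /sym_unit_count -(card_imset _ f_inj); apply: eq_card => M; rewrite !inE.
apply/and4P/imsetP => [[/eqP sM uM /eqP ulM /eqP urM] | [N]].
  have def_M : M = f (drsubmx M - D).
    by rewrite /f subrK -ulM -urM -(sym_dlsubmx sM) submxK.
  exists (drsubmx M - D) => //; rewrite inE raddfB /= sym_drsubmx // sD eqxx /=.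
  by move: uM; rewrite {1}def_M !unitmxE schur_det // !unitfE mulf_eq0 negb_or => /andP[].
rewrite inE => /andP[/eqP sN uN] ->.
rewrite /f tr_block_mx trmxK raddfD /= sN sD sH eqxx block_mxKul block_mxKur !eqxx /=.
by split => //; rewrite unitmxE schur_det // unitfE mulf_neq0 -?unitfE -?unitmxE.
Qed.

Lemma card_sym_unit_ulsub p q (H : 'M[F]_p) : H^T = H -> H \in unitmx ->
  #|[set M : 'M[F]_(p + q) | [&& M^T == M, M \in unitmx & ulsubmx M == H]]|
  = (#|F| ^ (p * q) * sym_unit_count q)%N.
Proof.
move=> sH uH; rewrite -sum1_card.
rewrite (partition_big (fun M : 'M[F]_(p + q) => ursubmx M) predT) //=.
rewrite -(card_mx F p q) -sum_nat_const; apply: eq_bigr => C _.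
rewrite -(card_sym_unit_schur C sH uH) -sum1_card.
by apply: eq_bigl => M; rewrite !inE !andbA.
Qed.

Definition corner_count n (a : F) (b : 'rV[F]_n) :=
  #|[set M : 'M[F]_(1 + n) |
     [&& M^T == M, M \in unitmx, ulsubmx M 0 0 == a & ursubmx M == b]]|.

Lemma sym_unit_count_corner n :
  sym_unit_count (1 + n) = (\sum_(a : F) \sum_(b : 'rV[F]_n) corner_count a b)%N.
Proof.
rewrite /sym_unit_count -sum1_card.
rewrite (partition_big (fun M : 'M[F]_(1 + n) => ulsubmx M 0 0) predT) //=.
apply: eq_bigr => a _; rewrite (partition_big (fun M : 'M[F]_(1 + n) => ursubmx M) predT) //=.
apply: eq_bigr => b _; rewrite /corner_count -sum1_card.
by apply: eq_bigl => M; rewrite !inE !andbA.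
Qed.

Lemma corner_count_unit n (a : F) (b : 'rV[F]_n) :
  a != 0 -> corner_count a b = sym_unit_count n.
Proof.
move=> nz_a; have ua : (a%:M : 'M[F]_1) \in unitmx.
  by rewrite unitmxE det_mx11 mxE mulr1n unitfE.
rewrite -(card_sym_unit_schur b (tr_scalar_mx 1 a) ua); apply: eq_card => M; rewrite !inE.
suff -> : (ulsubmx M == a%:M) = (ulsubmx M 0 0 == a) by [].
by apply/eqP/eqP => [-> | <-]; [rewrite mxE eqxx mulr1n | rewrite -mx11_scalar].
Qed.

Lemma corner_count0_0 n : corner_count 0 (0 : 'rV[F]_n) = 0%N.
Proof.
apply/eqP; rewrite cards_eq0; apply/eqP/setP => M; rewrite !inE.
apply/negP => /and4P[/eqP sM uM /eqP ul0 /eqP ur0].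
have def_M : M = block_mx 0 0 0 (drsubmx M).
  rewrite -{1}[M]submxK (sym_dlsubmx sM) ur0 trmx0 [ulsubmx M]mx11_scalar ul0.
  by rewrite raddf0.
by move: uM; rewrite def_M unitmxE det_ublock det0 mul0r unitr0.
Qed.

(* Congruence by diag(1, Q) moves the first row b to b Q^T and fixes the corner. *)
Lemma corner_count0_nz n (b b' : 'rV[F]_(1 + n)) : b != 0 -> b' != 0 ->
  corner_count 0 b = corner_count 0 b'.
Proof.
move=> nz_b nz_b'; have [R uR def_b] := e0_mulmx_onto nz_b.
have [R' uR' def_b'] := e0_mulmx_onto nz_b'.
set Q := (invmx R *m R')^T.
have uQT : Q^T \in unitmx by rewrite trmxK unitmx_mul unitmx_inv uR.
have bQ : b *m Q^T = b' by rewrite trmxK -def_b -def_b' mulmxA mulmxK.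
have uP : block_mx (1%:M : 'M_1) 0 0 Q \in unitmx.
  by rewrite unitmxE det_ublock det1 mul1r -unitmxE -unitmx_tr.
apply: (card_congr_mx uP) => M; have [ulM urM] := congr_mx_diag1 Q M.
by rewrite congr_mx_sym // congr_mx_unit // ulM urM -bQ (inj_eq (can_inj (mulmxK uQT))).
Qed.

Lemma card_rV_lead1 n : #|[set b : 'rV[F]_(1 + n) | b 0 0 == 1]| = (#|F| ^ n)%N.
Proof.
have row1_inj : injective (fun c : 'rV[F]_n => row_mx (1%:M : 'M[F]_1) c).
  by move=> c1 c2 /eq_row_mx[].
rewrite -[n in RHS]mul1n -(card_mx F 1 n) -cardsT -(card_imset _ row1_inj).
apply: eq_card => b; rewrite inE; apply/idP/imsetP => [b00 | [c _ ->]].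
  exists (rsubmx b) => //; rewrite -[b in LHS]hsubmxK; congr row_mx.
  rewrite [lsubmx b]mx11_scalar mxE -(eqP b00).
  by rewrite (_ : @lshift 1 n 0 = 0) //; apply: val_inj.
by rewrite (_ : 0 = @lshift 1 n 0) ?row_mxEl ?mxE //; apply: val_inj.
Qed.

Definition corner2 (a : F) : 'M[F]_2 :=
  \matrix_(i, j) if (i == 0) && (j == 0) then 0 else if (i == 1) && (j == 1) then a else 1.

Lemma corner2_sym a : (corner2 a)^T = corner2 a.
Proof. by apply/matrixP => i j; rewrite !mxE [(j == 0) && _]andbC [(j == 1) && _]andbC. Qed.

Lemma corner2_unit a : corner2 a \in unitmx.
Proof.
pose K : 'M[F]_2 := \matrix_(i, j) if (i == 0) && (j == 0) then - a else (i != j)%:R.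
suff : corner2 a *m K = 1%:M by case/mulmx1_unit.
apply/matrixP => i j; rewrite !mxE !big_ord_recr big_ord0 /= !mxE add0r.
by case: i => [[|[|]]] // ?; case: j => [[|[|]]] // ?;
  rewrite /= ?(mul0r, mulr0, mul1r, mulr1, add0r, addr0, addNr).
Qed.

Lemma sym_ulsub2 n (M : 'M[F]_(2 + n)) (a : F) : M^T = M ->
  [&& @ulsubmx F 1 (1 + n) 1 (1 + n) M 0 0 == 0, @ursubmx F 1 (1 + n) 1 (1 + n) M 0 0 == 1
    & @ulsubmx F 2 n 2 n M 1 1 == a] = (@ulsubmx F 2 n 2 n M == corner2 a).
Proof.
move=> sM; set A := @ulsubmx F 2 n 2 n M.
have -> : @ulsubmx F 1 (1 + n) 1 (1 + n) M 0 0 = A 0 0.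
  by rewrite !mxE; congr (M _ _); apply: val_inj.
have -> : @ursubmx F 1 (1 + n) 1 (1 + n) M 0 0 = A 0 1.
  by rewrite !mxE; congr (M _ _); apply: val_inj.
have A10 : A 1 0 = A 0 1 by rewrite !mxE -[in LHS]sM mxE.
have ord2P (i : 'I_2) : i = 0 \/ i = 1.
  by case: i => [[|[|]]] // ?; [left | right]; apply: val_inj.
apply/and3P/eqP => [[/eqP A00 /eqP A01 /eqP A11] | ->]; last by rewrite !mxE /= !eqxx.
apply/matrixP => i j; rewrite [RHS]mxE.
by case: (ord2P i) (ord2P j) => -> [] -> /=; rewrite ?A10.
Qed.

Lemma card_corner0_lead1 n :
  #|[set M : 'M[F]_(1 + (1 + n)) |
     [&& M^T == M, M \in unitmx, ulsubmx M 0 0 == 0 & ursubmx M 0 0 == 1]]| =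
  (#|F| * (#|F| ^ (2 * n) * sym_unit_count n))%N.
Proof.
rewrite -sum1_card.
rewrite (partition_big (fun M : 'M[F]_(2 + n) => @ulsubmx F 2 n 2 n M 1 1) predT) //=.
transitivity (\sum_(a : F) (#|F| ^ (2 * n) * sym_unit_count n))%N;
  last by rewrite sum_nat_const.
apply: eq_bigr => a _.
rewrite -(card_sym_unit_ulsub _ (corner2_sym a) (corner2_unit a)) -sum1_card.
apply: eq_bigl => M; rewrite !inE; case sM: (M^T == M) => //=.
by rewrite -(sym_ulsub2 a (eqP sM)) !andbA.
Qed.

(* All rows b with b 0 0 = 1 have the count of e0 n, and together they count the matrices
   whose upper-left 2x2 block is [[0, 1], [1, a]] for some a. *)
Lemma corner_count0_e0 n : corner_count 0 (e0 n) = (#|F| ^ n.+1 * sym_unit_count n)%N.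
Proof.
have qn_gt0 : (0 < #|F| ^ n)%N by rewrite expn_gt0 (ltn_trans _ (card_finNzRing_gt1 F)).
apply/eqP; rewrite -(eqn_pmul2l qn_gt0).
have <- : (\sum_(b : 'rV[F]_(1 + n) | b 0%R 0%R == 1%R) corner_count 0%R b =
           #|F| ^ n * corner_count 0%R (e0 n))%N.
  rewrite (eq_bigr (fun _ => corner_count 0 (e0 n))) => [|b b00]; last first.
    apply: corner_count0_nz; last exact: e0_neq0.
    by apply: contraTneq b00 => ->; rewrite mxE eq_sym oner_eq0.
  by rewrite sum_nat_const -card_rV_lead1; congr (_ * _)%N; apply: eq_card => b; rewrite inE.
rewrite mulnA -expnD addnS addnn -mul2n expnS -mulnA -card_corner0_lead1 -sum1_card.
rewrite (partition_big (fun M : 'M[F]_(1 + (1 + n)) => ursubmx M) (fun b => b 0 0 == 1));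
  last by move=> M; rewrite inE => /and4P[].
apply/eqP/eq_bigr => b b00; rewrite /corner_count -sum1_card; apply: eq_bigl => M.
rewrite !inE; case urM: (ursubmx M == b); rewrite ?andbF ?andbT //.
by rewrite (eqP urM) b00 !andbT.
Qed.

Lemma sym_unit_count0 : sym_unit_count 0 = 1%N.
Proof.
rewrite -[RHS](card_mx F 0 0) -cardsT; apply: eq_card => M.
by rewrite [M]flatmx0 !inE trmx0 eqxx unitmxE det_mx00 unitr1.
Qed.

Lemma sym_unit_count1 : sym_unit_count 1 = #|F|.-1.
Proof.
rewrite (sym_unit_count_corner 0) (bigD1 0) //= big1 => [|b _]; last first.
  by rewrite [b]thinmx0 corner_count0_0.
rewrite add0n -(cardC1 (0 : F)) -sum1_card; apply: eq_bigr => a nz_a.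
rewrite (eq_bigr (fun _ => 1%N)) => [|b _]; last by rewrite corner_count_unit ?sym_unit_count0.
by rewrite sum_nat_const card_mx.
Qed.

Lemma sym_unit_count_rec n : sym_unit_count n.+2 =
  (#|F|.-1 * #|F| ^ n.+1 * sym_unit_count n.+1
   + (#|F| ^ n.+1).-1 * (#|F| ^ n.+1 * sym_unit_count n))%N.
Proof.
rewrite -[n.+2]add1n sym_unit_count_corner (bigD1 0) //= addnC; congr (_ + _)%N.
  rewrite (eq_bigr (fun _ => #|F| ^ n.+1 * sym_unit_count n.+1))%N => [|a nz_a].
    by rewrite sum_nat_const cardC1 mulnA.
  rewrite (eq_bigr (fun _ => sym_unit_count n.+1)) => [|b _]; last exact: corner_count_unit.
  by rewrite sum_nat_const card_mx mul1n.
rewrite (bigD1 0) //= corner_count0_0 add0n.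
rewrite (eq_bigr (fun _ => corner_count 0 (e0 n))) => [|b nz_b]; last first.
  by apply: corner_count0_nz; last exact: e0_neq0.
by rewrite sum_nat_const cardC1 card_mx mul1n corner_count0_e0.
Qed.


End Counting.

Lemma card_F2 : #|'F_2| = 2%N.
Proof. by rewrite card_Fp. Qed.

Lemma card_Bprime n :
  #|Bprime n.+2| = #|[set M : 'M['F_2]_(1 + n) | (M^T == M) && (\rank M == n)]|.
Proof.
have nz1 : (const_mx 1 : 'rV['F_2]_(1 + (1 + n))) != 0.
  by apply/eqP => /matrixP /(_ 0 0); rewrite !mxE => /eqP; rewrite oner_eq0.
rewrite -(card_sym_ker_rank n nz1); apply: eq_card => M; rewrite !inE.
rewrite (_ : n.+2 - 2 = n)%N ?subn2 //; case sM: (M^T == M) => //=; rewrite andbC.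
congr (_ && _); have symM i j : M i j = M j i by rewrite -{1}(eqP sM) mxE.
apply/forallP/eqP => [row0 | /matrixP row0 i].
  apply/matrixP => i j; rewrite !mxE -[RHS](eqP (row0 j)).
  by apply: eq_bigr => k _; rewrite mxE mul1r symM.
apply/eqP; transitivity ((const_mx 1 *m M : 'rV_(n.+2)) 0 i); last by rewrite row0 mxE.
by rewrite mxE; apply: eq_bigr => k _; rewrite mxE mul1r symM.
Qed.


Lemma u_seqS j : u_seq j.+1 = if odd j then u_seq j * (1 - 2%:Q ^- j) else u_seq j.
Proof.
rewrite /u_seq -uphalfE uphalf_half; case: ifP => [odd_j | _]; last by rewrite add0n.
rewrite add1n big_nat_recr //=; congr (_ * (1 - 2%:Q ^- _)).
by have := odd_double_half j; rewrite odd_j -mul2n; lia.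
Qed.

Definition sym_unit_formula n : rat := 2%:Q ^+ 'C(n.+1, 2) * u_seq n.+1.

Lemma sym_unit_formula_rec n :
  sym_unit_formula n.+2 = 2%:Q ^+ n.+1 * sym_unit_formula n.+1
                          + (2%:Q ^+ n.+1 - 1) * (2%:Q ^+ n.+1 * sym_unit_formula n).
Proof.
have bin2 : 'C(n.+2, 2) = ('C(n.+1, 2) + n.+1)%N by rewrite binS bin1.
have bin3 : 'C(n.+3, 2) = ('C(n.+1, 2) + n.+1 + n.+2)%N by rewrite binS bin1 bin2.
rewrite /sym_unit_formula bin2 bin3 (u_seqS n.+2) (u_seqS n.+1) !oddS negbK.
rewrite !exprD [2%:Q ^+ n.+2]exprS.
set x := 2%:Q ^+ n.+1; have nz_x : x != 0 by rewrite expf_neq0.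
by clearbody x; case: (odd n) => /=; field.
Qed.

Lemma sym_unit_count_F2E n : (sym_unit_count 'F_2 n)%:R = sym_unit_formula n :> rat.
Proof.
elim/ltn_ind: n => [[|[|n]]] IH.
- by rewrite sym_unit_count0 /sym_unit_formula bin_small // /u_seq big_geq.
- by rewrite sym_unit_count1 card_F2 /sym_unit_formula binn /u_seq big_nat1 /=; field.
rewrite sym_unit_count_rec card_F2 mul1n sym_unit_formula_rec natrD !natrM.
by rewrite -subn1 natrB ?expn_gt0 // natrX !IH.
Qed.

Theorem mainTheorem8 (k : nat) (hk : (2 <= k)%N) :
  (#|Bprime k|)%:R =
    (2%:Q ^+ 'C(k.-1, 2)) * u_seq k.-1 * (2%:Q ^+ k.-1 - 1) :> rat.
Proof.
case: k hk => [|[|n]] // _.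
have := card_sym_corank1 'F_2 n; rewrite card_F2 mul1n card_Bprime => ->.
by rewrite natrM -subn1 natrB ?expn_gt0 // natrX sym_unit_count_F2E mulrC.
Qed.
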